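(* Let $\mathcal{G}$ be an MVPP always-grabbing pawn game with pawns $[d]$, let $\langle v,P\rangle$ be a configuration, let $j\in[d]$ be the pawn with $v\in V_j$, and let $P'\subseteq P$. (1) If ($j\in P$ implies $j\in P'$) and Player 1 wins from $\langle v,P\rangle$, then Player 1 wins from $\langle v,P'\rangle$. (2) If ($j\notin P'$ implies $j\notin P$) and Player 2 wins from $\langle v,P'\rangle$, then Player 2 wins from $\langle v,P\rangle$.
   Context: A pawn game with $d$ pawns consists of a finite directed graph $(V,E)$, a target set $T\subseteq V$, and sets $V_1,\dots,V_d$ partitioning $V$ (MVPP), where Pawn $j$ owns the vertices in $V_j$. A configuration $\langle v,P\rangle$ gives the token position and the set $P\subseteq[d]$ of pawns controlled by Player 1 (Player 2 controls the rest). At $\langle v,P\rangle$, Player 1 moves the token along an edge iff he controls the pawn owning $v$; otherwise Player 2 moves. Under always grabbing, after every move of Player $i$, the other player must take exactly one pawn currently controlled by Player $i$. Player 1 wins a play iff it visits $T$, otherwise Player 2 wins; winning from a configuration means having a strategy that wins against all opponent strategies. *)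

From mathcomp Require Import all_boot.
Set Implicit Arguments. Unset Strict Implicit. Unset Printing Implicit Defensive.

Section PawnGame.
(* d pawns 'I_d; finite directed graph (V, E); target T;
   own v = the pawn j with v \in V_j (so V_1..V_d partition V). *)
Variables (d : nat) (V : finType) (E : rel V) (T : {set V}) (own : V -> 'I_d).

(* configuration <v, P>: token position, set of pawns controlled by Player 1 *)
Definition Conf := (V * {set 'I_d})%type.

(* Player 1 is [true], Player 2 is [false].  A player controls the move at
   <v,P> iff (own v \in P) == player. *)

(* A (history-dependent) strategy: a move choice for when the player moves,
   and a grab choice for when the opponent has just moved to vertex u.
   The history argument is the list of previous configurations. *)
Record strategy := Strategy {
  smove : seq Conf -> Conf -> V;
  sgrab : seq Conf -> Conf -> V -> 'I_d }.

Definition legal (pl : bool) (s : strategy) : Prop :=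
  forall (h : seq Conf) (v : V) (P : {set 'I_d}),
    ((own v \in P) = pl -> E v (smove s h (v, P))) /\
    ((own v \in P) = ~~ pl -> forall u, (sgrab s h (v, P) u \in P) = ~~ pl).

(* one round: the controller moves the token, then the other player takes
   exactly one pawn from the mover (always grabbing). *)
Definition step (s1 s2 : strategy) (h : seq Conf) (c : Conf) : Conf :=
  let: (v, P) := c in
  if own v \in P then
    let u := smove s1 h c in (u, P :\ sgrab s2 h c u)
  else
    let u := smove s2 h c in (u, P :|: [set sgrab s1 h c u]).

(* run n = (history before the n-th configuration, n-th configuration) *)
Fixpoint run (s1 s2 : strategy) (c0 : Conf) (n : nat) : seq Conf * Conf :=
  match n with
  | 0 => ([::], c0)
  | n'.+1 => let: (h, c) := run s1 s2 c0 n' in (rcons h c, step s1 s2 h c)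
  end.

Definition visits_T (s1 s2 : strategy) (c0 : Conf) : Prop :=
  exists n, ((run s1 s2 c0 n).2).1 \in T.

Definition wins1 (v : V) (P : {set 'I_d}) : Prop :=
  exists s1, legal true s1 /\
    forall s2, legal false s2 -> visits_T s1 s2 (v, P).

Definition wins2 (v : V) (P : {set 'I_d}) : Prop :=
  exists s2, legal false s2 /\
    forall s1, legal true s1 -> ~ visits_T s1 s2 (v, P).

End PawnGame.

From mathcomp Require Import all_boot.
Set Implicit Arguments. Unset Strict Implicit. Unset Printing Implicit Defensive.

(* Couple the game from <v,P> with the game from <v,P'>: the token is at the
   same vertex in both, Player 1's pawns in the P'-game are among those in the
   P-game, and the same player controls the current vertex.  A strategy is
   transferred from one game to the other by replaying, from the history, the
   run it faces in its own game and copying its moves and grabs; the only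
   change is that when the two games disagree on who controls the vertex just
   reached, the grabber takes the pawn owning it, which restores the
   invariant.  So Player 1's strategies move from <v,P> to <v,P'>, Player 2's
   from <v,P'> to <v,P>, and the coupled runs visit the same vertices. *)

Section Replay.
Variables (C : Type) (c0 : C) (upd : seq C -> C -> C -> C -> C).

Fixpoint replay_rev (r : seq C) : seq C * C :=
  match r with
  | c1 :: ((c :: _) as r') =>
      let: (sh, sc) := replay_rev r' in (rcons sh sc, upd sh sc c c1)
  | _ => ([::], c0)
  end.

Definition replay (h : seq C) (c : C) : seq C * C := replay_rev (c :: rev h).

Lemma replay_rcons h c c1 sh sc :
  replay h c = (sh, sc) -> replay (rcons h c) c1 = (rcons sh sc, upd sh sc c c1).
Proof.
move=> hcE; rewrite /replay rev_rcons.
rewrite -[replay_rev _]/(let: (sh, sc) := replay_rev (c :: rev h) in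
                         (rcons sh sc, upd sh sc c c1)).
by rewrite -/(replay h c) hcE.
Qed.

End Replay.

Section Realign.
Variable T : finType.

Definition realign (p : T) (X Y : {set T}) (g : T) : T :=
  if (p \in X) != (p \in Y) then p else g.

Lemma subset_mem_neq (A B : {set T}) p : B \subset A ->
  (p \in A) != (p \in B) -> p \in A /\ p \notin B.
Proof.
move=> /subsetP sBA AB; have pB : p \notin B by apply: contra AB => pB; rewrite pB sBA.
by split=> //; move: AB; rewrite (negbTE pB); case: (p \in A).
Qed.

Lemma realign_setD (A B : {set T}) p g : B \subset A -> g \in B ->
  let g' := realign p A B g in
  [/\ g' \in A, B :\ g \subset A :\ g' & (p \in A :\ g') = (p \in B :\ g)].
Proof.
move=> sBA gB; rewrite /realign; case: ifPn => [/(subset_mem_neq sBA)[pA pB] | /negPn/eqP AB].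
  rewrite !inE eqxx (negbTE pB) andbF; split=> //.
  apply/subsetP => y; rewrite !inE => /andP[_ yB]; rewrite (subsetP sBA) // andbT.
  by apply: contraNneq pB => <-.
by rewrite !inE AB (subsetP sBA) //; split=> //; apply: setSD.
Qed.

Lemma realign_setU (A B : {set T}) p g : B \subset A -> g \notin A ->
  let g' := realign p B A g in
  [/\ g' \notin B, B :|: [set g'] \subset A :|: [set g]
    & (p \in A :|: [set g]) = (p \in B :|: [set g'])].
Proof.
move=> sBA gA; rewrite /realign eq_sym.
case: ifPn => [/(subset_mem_neq sBA)[pA pB] | /negPn/eqP AB].
  rewrite !inE pA eqxx orbT; split=> //.
  by apply/subsetP => y; rewrite !inE => /orP[/(subsetP sBA) -> // | /eqP ->]; rewrite pA.
rewrite !inE AB; split=> //; last exact: setSU.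
by apply: contra gA; apply: (subsetP sBA).
Qed.

End Realign.

Section Mimic.
Variables (d : nat) (V : finType) (E : rel V) (own : V -> 'I_d).
Hypothesis no_dead_end : forall x : V, exists y : V, E x y.

Local Notation conf := (Conf d V).
Local Notation strat := (strategy d V).

Definition follow_move (w x : V) : V :=
  if E w x then x else odflt w [pick y | E w y].

Lemma follow_moveP w x : E w (follow_move w x).
Proof.
rewrite /follow_move; case: ifP => // _; case: pickP => //= noE.
by have [y] := no_dead_end w; rewrite noE.
Qed.

Lemma follow_move_edge w x : E w x -> follow_move w x = x.
Proof. by rewrite /follow_move => ->. Qed.

Definition fit_grab (X : {set 'I_d}) (w : V) (g : 'I_d) : 'I_d :=
  if (g \in X) == (own w \in X) then g else own w.

Lemma mem_fit_grab (X : {set 'I_d}) w g : (fit_grab X w g \in X) = (own w \in X).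
Proof. by rewrite /fit_grab; case: eqP. Qed.

Lemma fit_grab_id (X : {set 'I_d}) w g : (g \in X) = (own w \in X) -> fit_grab X w g = g.
Proof. by rewrite /fit_grab => ->; rewrite eqxx. Qed.

Definition grab_update (X : {set 'I_d}) (w : V) (g : 'I_d) : {set 'I_d} :=
  if own w \in X then X :\ g else X :|: [set g].

Definition grabbed (w : V) (Y Y1 : {set 'I_d}) : 'I_d :=
  odflt (own w) [pick g | (g \in Y) != (g \in Y1)].

Lemma grabbed_grab_update (Y : {set 'I_d}) w g :
  (g \in Y) = (own w \in Y) -> grabbed w Y (grab_update Y w g) = g.
Proof.
move=> gY; have changed g0 : ((g0 \in Y) != (g0 \in grab_update Y w g)) = (g0 == g).
  rewrite /grab_update -gY; case: (g0 =P g) => [-> | /eqP ne].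
    by case: ifP => gY'; rewrite !inE eqxx ?gY'.
  by case: ifP => _; rewrite !inE ?ne ?(negbTE ne) ?orbF; case: (g0 \in Y).
rewrite /grabbed; case: pickP => [g0 | none]; first by rewrite changed => /eqP.
by have := none g; rewrite changed eqxx.
Qed.

(* When the simulated player [pl] has just moved, the opponent's grab is the
   pawn that changed hands in the real game, realigned at the new vertex; the
   default [own w] of [grabbed] is never used, since every grab changes hands. *)
Definition shadow_step (pl : bool) (s : strat) (sh : seq conf) (sc c c1 : conf) : conf :=
  let: (w, X) := sc in
  let g := if (own w \in X) == pl then realign (own c1.1) X c.2 (grabbed w c.2 c1.2)
           else sgrab s sh sc c1.1 in
  (c1.1, grab_update X w g).

Definition shadow (pl : bool) (s : strat) (c0 : conf) : seq conf -> conf -> seq conf * conf :=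
  replay c0 (shadow_step pl s).

Definition mimic (sim : seq conf -> conf -> seq conf * conf) (s : strat) : strat :=
  Strategy (fun h c => follow_move c.1 (smove s (sim h c).1 (sim h c).2))
    (fun h c u => fit_grab c.2 c.1
       (realign (own u) c.2 (sim h c).2.2 (sgrab s (sim h c).1 (sim h c).2 u))).

Lemma legal_mimic pl sim s : legal E own pl (mimic sim s).
Proof.
move=> h w X; split=> [_ | Hw u]; first exact: follow_moveP.
by rewrite /= mem_fit_grab Hw.
Qed.

Definition aligned (c c' : conf) : Prop :=
  [/\ c.1 = c'.1, c'.2 \subset c.2 & (own c.1 \in c.2) = (own c.1 \in c'.2)].

Section Coupling.
Variables (v : V) (P P' : {set 'I_d}) (s1 s2 : strat).
Hypotheses (sP'P : P' \subset P) (ctrl_v : (own v \in P) = (own v \in P')).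
Hypotheses (legal_s1 : legal E own true s1) (legal_s2 : legal E own false s2).

Local Notation sim1 := (shadow true s1 (v, P)).
Local Notation sim2 := (shadow false s2 (v, P')).

Lemma coupled_step_player1 hb hs w A B :
  sim1 hs (w, B) = (hb, (w, A)) -> sim2 hb (w, A) = (hs, (w, B)) ->
  B \subset A -> own w \in A -> own w \in B ->
  let cb := step own s1 (mimic sim2 s2) hb (w, A) in
  let cs := step own (mimic sim1 s1) s2 hs (w, B) in
  [/\ shadow_step true s1 hb (w, A) (w, B) cs = cb,
      shadow_step false s2 hs (w, B) (w, A) cb = cs & aligned cb cs].
Proof.
move=> sim1E sim2E sBA wA wB /=; rewrite wA wB /= sim1E sim2E /=.
set x := smove s1 hb (w, A).
have /follow_move_edge -> : E w x := (legal_s1 hb w A).1 wA.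
set g := sgrab s2 hs (w, B) x.
have gB : g \in B := (legal_s2 hs w B).2 wB x.
have [g'A sBA' ctrl_x] := realign_setD (own x) sBA gB.
have removeB : B :\ g = grab_update B w g by rewrite /grab_update wB.
rewrite fit_grab_id ?g'A // removeB grabbed_grab_update ?gB //.
by rewrite /grab_update wA wB.
Qed.

Lemma coupled_step_player2 hb hs w A B :
  sim1 hs (w, B) = (hb, (w, A)) -> sim2 hb (w, A) = (hs, (w, B)) ->
  B \subset A -> own w \notin A -> own w \notin B ->
  let cb := step own s1 (mimic sim2 s2) hb (w, A) in
  let cs := step own (mimic sim1 s1) s2 hs (w, B) in
  [/\ shadow_step true s1 hb (w, A) (w, B) cs = cb,
      shadow_step false s2 hs (w, B) (w, A) cb = cs & aligned cb cs].
Proof.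
move=> sim1E sim2E sBA /negbTE wA /negbTE wB /=; rewrite wA wB /= sim1E sim2E /=.
set x := smove s2 hs (w, B).
have /follow_move_edge -> : E w x := (legal_s2 hs w B).1 wB.
set g := sgrab s1 hb (w, A) x.
have gA : g \notin A by rewrite (legal_s1 hb w A).2.
have [/negbTE g'B sBA' ctrl_x] := realign_setU (own x) sBA gA.
have addA : A :|: [set g] = grab_update A w g by rewrite /grab_update wA.
rewrite fit_grab_id ?g'B // addA grabbed_grab_update ?(negbTE gA) //.
by rewrite /grab_update wA wB.
Qed.

Lemma coupled_step hb hs w A B :
  sim1 hs (w, B) = (hb, (w, A)) -> sim2 hb (w, A) = (hs, (w, B)) ->
  aligned (w, A) (w, B) ->
  let cb := step own s1 (mimic sim2 s2) hb (w, A) in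
  let cs := step own (mimic sim1 s1) s2 hs (w, B) in
  [/\ sim1 (rcons hs (w, B)) cs = (rcons hb (w, A), cb),
      sim2 (rcons hb (w, A)) cb = (rcons hs (w, B), cs) & aligned cb cs].
Proof.
move=> sim1E sim2E [_ sBA ctrl_w] cb cs; rewrite /= in sBA ctrl_w.
rewrite /shadow (replay_rcons _ sim1E) (replay_rcons _ sim2E).
have [wA | wA] := boolP (own w \in A).
  by case: (coupled_step_player1 sim1E sim2E sBA wA); rewrite -?ctrl_w // => -> ->.
by case: (coupled_step_player2 sim1E sim2E sBA wA); rewrite -?ctrl_w // => -> ->.
Qed.

Lemma coupled_run n :
  let: (hb, cb) := run own s1 (mimic sim2 s2) (v, P) n in
  let: (hs, cs) := run own (mimic sim1 s1) s2 (v, P') n in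
  [/\ sim1 hs cs = (hb, cb), sim2 hb cb = (hs, cs) & aligned cb cs].
Proof.
elim: n => [|n] /=; first by [].
case: (run own s1 _ _ n) => hb [w A]; case: (run own _ s2 _ n) => hs [w' B].
move=> [sim1E sim2E al]; have [/= eq_w _ _] := al; subst w'; exact: coupled_step.
Qed.

Lemma visits_T_coupled (T : {set V}) :
  visits_T T own s1 (mimic sim2 s2) (v, P) <-> visits_T T own (mimic sim1 s1) s2 (v, P').
Proof.
have same_pos n : (run own s1 (mimic sim2 s2) (v, P) n).2.1 =
                  (run own (mimic sim1 s1) s2 (v, P') n).2.1.
  move: (coupled_run n); case: (run own s1 _ _ n) => hb cb.
  by case: (run own _ s2 _ n) => hs cs [_ _ []].
by split=> -[n]; exists n; rewrite ?same_pos // -same_pos.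
Qed.

End Coupling.

End Mimic.

Theorem theorem26 (d : nat) (V : finType) (E : rel V) (T : {set V})
  (own : V -> 'I_d)
  (no_dead_end : forall x : V, exists y : V, E x y)
  (v : V) (P P' : {set 'I_d}) (HP'P : P' \subset P) :
  ((own v \in P -> own v \in P') ->
     wins1 E T own v P -> wins1 E T own v P') /\
  ((own v \notin P' -> own v \notin P) ->
     wins2 E T own v P' -> wins2 E T own v P).
Proof.
have ctrl_eq : (own v \in P -> own v \in P') -> (own v \in P) = (own v \in P').
  by move=> PP'; apply/idP/idP => [/PP' | /(subsetP HP'P)].
split=> [/ctrl_eq ctrl_v [s1 [legal_s1 win1]] | /contraTT/ctrl_eq ctrl_v [s2 [legal_s2 win2]]].
  exists (mimic E own (shadow own true s1 (v, P)) s1).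
  split=> [|s2 legal_s2]; first exact: legal_mimic.
  apply/(visits_T_coupled HP'P ctrl_v legal_s1 legal_s2).
  exact/win1/legal_mimic.
exists (mimic E own (shadow own false s2 (v, P')) s2).
split=> [|s1 legal_s1]; first exact: legal_mimic.
move/(visits_T_coupled HP'P ctrl_v legal_s1 legal_s2).
exact/win2/legal_mimic.
Qed.
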